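(* For each $\mu\in \mathcal{M}^*(X)$, the set $(\pi_{f*})^{-1}(\mu)$ consists of a single point, which we denote by $\mu_f$. The map $\mathcal{M}^*(X)\rightarrow \mathcal{M}(X_f)$ sending $\mu$ to $\mu_f$ is continuous.
   Context: Let $\Gamma$ (countably infinite) act minimally and continuously on a compact metrizable space $X$ which consists of more than one orbit. Let $x_1\in X$ have trivial stabilizer, and let $f:X\setminus\{x_1\}\to\{1,-1\}$ be continuous but not continuously extendable to $X$. McMahon's construction gives a minimal action $\Gamma\curvearrowright X_f$ on a compact metrizable space and a factor map $\pi_f:X_f\to X$ such that $\pi_f^{-1}(x)$ is one point for $x\notin\Gamma x_1$ and two points for $x\in\Gamma x_1$, and $f\circ\pi_f$ extends continuously to $X_f$. For a compact metrizable space $W$, $\mathcal{M}(W)$ denotes the space of Borel probability measures on $W$ with the weak$^*$-topology; $\mathcal{M}^*(X)$ is the set of nonatomic $\mu\in\mathcal{M}(X)$ (i.e. $\mu(\{x\})=0$ for all $x$), and $\pi_{f*}:\mathcal{M}(X_f)\to\mathcal{M}(X)$ is the continuous surjection induced by $\pi_f$. *)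

From HB Require Import structures.
From mathcomp Require Import all_boot all_order all_algebra.
From mathcomp Require Import all_classical all_reals all_analysis.
Set Implicit Arguments. Unset Strict Implicit. Unset Printing Implicit Defensive.
Import Order.TTheory GRing.Theory Num.Theory.
Import numFieldNormedType.Exports.
Local Open Scope classical_set_scope.
Local Open Scope ring_scope.

Notation borel T := (g_sigma_algebraType (@open T)).

Notation prob T R := (probability (borel T) R).

Section group_actions.
Context (G : groupType) (T : topologicalType).

Definition is_action (act : G -> T -> T) : Prop :=
  [/\ (forall x, act 1%g x = x),
      (forall g h x, act (g * h)%g x = act g (act h x)) &
      (forall g, continuous (act g))].

Definition gorbit (act : G -> T -> T) (x : T) : set T :=
  [set act g x | g in [set: G]].

Definition invariant_set (act : G -> T -> T) (A : set T) : Prop :=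
  forall g x, A x -> A (act g x).

Definition minimal_action (act : G -> T -> T) : Prop :=
  forall A : set T, closed A -> invariant_set act A -> A !=set0 -> A = [set: T].
End group_actions.

Section measures.
Context (R : realType).

Definition integ (T : ptopologicalType) (P : prob T R) (g : T -> R) : R :=
  fine (\int[P]_x (g x)%:E)%E.

Definition nonatomic (T : ptopologicalType) (P : prob T R) : Prop :=
  forall x : T, P [set x] = 0%E.

Definition pushes (Y X : ptopologicalType) (pi : Y -> X)
  (nu : prob Y R) (mu : prob X R) : Prop :=
  forall A : set (borel X), measurable A -> nu (pi @^-1` A) = mu A.

Definition same_measure (T : ptopologicalType) (P Q : prob T R) : Prop :=
  forall A : set (borel T), measurable A -> P A = Q A.

(** Continuity of Phi : S -> M(Y) (S a subset of M(X)) for the weak-* topologies,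
    i.e. the initial topologies of the maps nu |-> \int g dnu, g in C(W), with
    the subspace topology on S; stated via the basic weak-* neighbourhoods. *)
Definition weak_continuous_on (X Y : ptopologicalType) (S : set (prob X R))
  (Phi : prob X R -> prob Y R) : Prop :=
  forall mu, S mu ->
  forall (n : nat) (gs : 'I_n -> Y -> R) (eps : R),
    (forall i, continuous (gs i)) -> 0 < eps ->
    exists (m : nat) (hs : 'I_m -> X -> R) (del : R),
      [/\ (forall j, continuous (hs j)), 0 < del &
        forall mu', S mu' ->
          (forall j, `|integ mu' (hs j) - integ mu (hs j)| < del) ->
          forall i, `|integ (Phi mu') (gs i) - integ (Phi mu) (gs i)| < eps].
End measures.

From HB Require Import structures.
From mathcomp Require Import all_boot all_order all_algebra.
From mathcomp Require Import all_classical all_reals all_analysis.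
From mathcomp Require Import measurable_realfun.
From mathcomp Require Import ring lra.
Set Implicit Arguments.
Unset Strict Implicit.
Unset Printing Implicit Defensive.
Import Order.TTheory GRing.Theory Num.Theory.
Import numFieldNormedType.Exports.
Local Open Scope classical_set_scope.
Local Open Scope ring_scope.

(* pi_f is one-to-one off the countable orbit Gamma x1, which is null for every
   nonatomic mu.  Hence any Borel section s of pi_f (one exists: pi_f is a
   closed map and s^-1 U differs from the open set X \ pi_f(X_f \ U) only
   inside the orbit) pushes mu to a lift mu_f, and every lift agrees with s_* mu
   off the null set pi_f^-1(Gamma x1).
   For continuity, int g d(mu_f) = int (g o s) dmu, where g o s is bounded and
   continuous off the orbit, i.e. mu-almost everywhere.  The Lipschitz envelopes
   x |-> sup_z (G z - k d(x, z)) of a bounded G are continuous, lie above G and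
   decrease to G at its continuity points, so by dominated convergence g o s and
   -(g o s) have continuous majorants with almost the same mu-integral; weak-*
   closeness of mu' to mu on these majorants squeezes int (g o s) dmu' near
   int (g o s) dmu. *)

Local Open Scope ereal_scope.
Lemma mine1_subadditive {R : realType} (a b c : \bar R) : 0 <= a -> 0 <= b ->
  c <= a + b -> mine c 1 <= mine a 1 + mine b 1.
Proof.
move=> a0 b0 cab.
have [a1|a1] := leP 1 a.
  by rewrite ge_min leeDl ?orbT // le_min b0 lee01.
have [b1|b1] := leP 1 b; first by rewrite ge_min leeDr ?orbT // ltW.
by rewrite ge_min cab.
Qed.
Close Scope ereal_scope.

Section truncated_distance.
Context {R : realType} {X : pseudoMetricType R}.

(* [edist] may be [+oo] since the pseudometric is only given by its balls;
   truncating it at 1 gives a real-valued distance with the same small balls. *)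
Definition tdist (x y : X) : R := fine (mine (edist (x, y)) 1%E).

Lemma tdistE x y : (tdist x y)%:E = mine (edist (x, y)) 1%E.
Proof.
rewrite fineK // ge0_fin_numE ?le_min ?edist_ge0 ?lee01 //.
by rewrite (le_lt_trans _ (ltry 1)) // ge_min lexx orbT.
Qed.

Lemma tdist_ge0 x y : 0 <= tdist x y.
Proof. by rewrite -lee_fin tdistE le_min edist_ge0 lee01. Qed.

Lemma tdist_refl x : tdist x x = 0.
Proof. by apply/eqP; rewrite -eqe tdistE edist_refl min_l ?lee01. Qed.

Lemma tdist_sym x y : tdist x y = tdist y x.
Proof. by rewrite /tdist edist_sym. Qed.

Lemma tdist_triangle x y z : tdist x z <= tdist x y + tdist y z.
Proof.
rewrite -lee_fin EFinD !tdistE.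
exact: mine1_subadditive (edist_ge0 _) (edist_ge0 _) (edist_triangle _ _ _).
Qed.

Lemma tdist_le_ball x y r : 0 < r -> ball x r y -> tdist x y <= r.
Proof.
move=> r0 xy; have xyr := @edist_fin _ _ _ (x, y) r0 xy.
by rewrite -lee_fin tdistE ge_min xyr.
Qed.

Lemma ball_tdist x y r : r <= 1 -> tdist x y < r -> ball x r y.
Proof.
move=> r1; rewrite -lte_fin tdistE gt_min => /orP[xy|].
  exact: (@edist_lt_ball _ _ _ (x, y)).
by rewrite lte_fin ltNge r1.
Qed.
End truncated_distance.

Section lipschitz_envelope.
Context {R : realType} {X : pseudoMetricType R}.
Variables (F : X -> R) (M : R).
Hypothesis F_bounded : forall z, `|F z| <= M.

Definition lip_envelope (k : R) (x : X) : R :=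
  sup [set F z - k * tdist x z | z in [set: X]].

Let envelope_set_ne (k : R) x : [set F z - k * tdist x z | z in [set: X]] !=set0.
Proof. by exists (F x - k * tdist x x), x. Qed.

Let envelope_set_ub (k : R) x : 0 <= k ->
  ubound [set F z - k * tdist x z | z in [set: X]] M.
Proof.
move=> k0 _ [z _ <-]; have := mulr_ge0 k0 (tdist_ge0 x z).
have := F_bounded z; rewrite ler_norml => /andP[_ ?]; lra.
Qed.

Let lip_envelope_ub (k : R) x z : 0 <= k -> F z - k * tdist x z <= lip_envelope k x.
Proof.
move=> k0; apply: sup_upper_bound; last by exists z.
by split; [exact: envelope_set_ne | exists M; exact: envelope_set_ub].
Qed.

Lemma le_lip_envelope (k : R) x : 0 <= k -> F x <= lip_envelope k x.
Proof. by move=> k0; have := lip_envelope_ub x x k0; rewrite tdist_refl mulr0 subr0. Qed.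

Lemma lip_envelope_bounded (k : R) x : 0 <= k -> `|lip_envelope k x| <= M.
Proof.
move=> k0; rewrite ler_norml (ge_sup (envelope_set_ne _ _) (envelope_set_ub k0)) andbT.
have := le_lip_envelope x k0; have := F_bounded x; rewrite ler_norml => /andP[? _]; lra.
Qed.

Lemma lip_envelope_lipschitz (k : R) x y : 0 <= k ->
  lip_envelope k x <= lip_envelope k y + k * tdist x y.
Proof.
move=> k0; apply: ge_sup (envelope_set_ne _ _) _ => _ [z _ <-].
have := lip_envelope_ub y z k0.
have : k * tdist y z <= k * tdist y x + k * tdist x z.
  by rewrite -mulrDr ler_wpM2l // tdist_triangle.
rewrite (tdist_sym y x); lra.
Qed.

Lemma lip_envelope_continuous (k : R) : 0 <= k -> continuous (lip_envelope k).
Proof.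
move=> k0 x; apply/cvgrPdist_lt => e e0.
have ek0 : 0 < e / (k + 1) by rewrite divr_gt0 // ltr_wpDl.
near=> y.
have : k * tdist x y <= k * (e / (k + 1)).
  by rewrite ler_wpM2l // tdist_le_ball //; near: y; exact: nbhsx_ballx.
have -> : k * (e / (k + 1)) = e - e / (k + 1) by field; rewrite gt_eqF // ltr_wpDl.
have := lip_envelope_lipschitz x y k0; have := lip_envelope_lipschitz y x k0.
rewrite (tdist_sym y x) ltr_norml; lra.
Unshelve. all: by end_near.
Qed.

Lemma lip_envelope_cvg x : {for x, continuous F} ->
  (fun n : nat => lip_envelope n%:R x) @ \oo --> F x.
Proof.
move=> /cvgrPdist_lt Fx; apply/cvgrPdist_lt => e e0.
have /nbhs_ballP[r /= r0 Fball] := Fx _ (divr_gt0 e0 (ltr0n _ 2)).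
pose r' := Num.min r 1.
have r'0 : 0 < r' by rewrite lt_min r0 ltr01.
have r'r : r' <= r by rewrite ge_min lexx.
have r'1 : r' <= 1 by rewrite ge_min lexx orbT.
near=> n.
have n0 : 0 <= n%:R :> R := ler0n _ n.
have Mn : 2 * M <= n%:R * r'.
  by rewrite -ler_pdivrMr //; near: n; exact: nbhs_infty_ger.
suff : lip_envelope n%:R x <= F x + e / 2.
  by have := le_lip_envelope x n0; rewrite ltr_norml; lra.
apply: ge_sup (envelope_set_ne _ _) _ => _ [z _ <-].
have := mulr_ge0 n0 (tdist_ge0 x z).
have [xz|xz] := pselect (ball x r' z).
  have := Fball z (le_ball r'r xz); rewrite ltr_norml; lra.
have : r' <= tdist x z by rewrite leNgt; apply/negP => /(ball_tdist r'1).
move=> /(ler_wpM2l n0); have := F_bounded x; have := F_bounded z.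
rewrite !ler_norml; lra.
Unshelve. all: by end_near.
Qed.
End lipschitz_envelope.

Section borel_measurability.
Context {R : realType}.

Lemma open_measurable_borel (T : ptopologicalType) (U : set T) :
  open U -> measurable (U : set (borel T)).
Proof. exact: sub_sigma_algebra. Qed.

Lemma set1_measurable_borel (T : ptopologicalType) (x : T) :
  hausdorff_space T -> measurable ([set x] : set (borel T)).
Proof.
move=> /hausdorff_accessible /accessible_closed_set1 x_closed.
rewrite -(setCK [set x]); apply: measurableC; apply: open_measurable_borel.
exact: closed_openC.
Qed.

Lemma continuous_measurable_borel (T U : ptopologicalType) (f : T -> U) :
  continuous f -> measurable_fun [set: borel T] (f : borel T -> borel U).
Proof.
move=> /continuousP f_cont.
apply: (@measurability _ _ (borel T) (borel U) _ _ (@open U) erefl).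
move=> _ [V oV <-]; rewrite setTI; apply: open_measurable_borel; exact: f_cont.
Qed.

Lemma continuous_measurable_borelR (T : ptopologicalType) (f : T -> R) :
  continuous f -> measurable_fun [set: borel T] f.
Proof.
move=> /continuousP f_cont; apply: measurability (RGenOpens.measurableE R) _.
move=> _ [_ [a [b ->] <-]]; rewrite setTI.
apply: open_measurable_borel; apply: f_cont; exact: interval_open.
Qed.

Lemma measureD_null d (T : measurableType d) (m : {measure set T -> \bar R})
    (A B : set T) :
  measurable A -> measurable B -> m B = 0%E -> m (A `\` B) = m A.
Proof.
move=> mA mB mB0.
rewrite [RHS](measureDI m mA mB) [X in (_ + X)%E](_ : _ = 0%E) ?adde0//.
apply/eqP; rewrite -measure_le0 -mB0 le_measure ?inE//; exact: measurableI.
Qed.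

Lemma nonatomic_countable0 (T : ptopologicalType) (mu : prob T R) (A : set T) :
  hausdorff_space T -> nonatomic mu -> countable A -> mu A = 0%E.
Proof.
move=> T_hausdorff mu_na A_countable.
have mA : measurable (A : set (borel T)).
  by apply: countable_measurable => // x; exact: set1_measurable_borel.
move: A_countable => /countable_injP[f f_inj].
pose g := 'pinv_(cst point) A f.
have A_sub : (A : set (borel T)) `<=` \bigcup_n [set g n].
  by move=> x Ax; exists (f x) => //; rewrite /g /= pinvKV ?inE.
apply/(negligibleP _ mA); apply: negligibleS A_sub _; apply: negligible_bigcup => n.
by exists [set g n]; split => //; [exact: set1_measurable_borel | exact: mu_na].
Qed.
End borel_measurability.

Section bounded_integration.
Context {R : realType} {T : ptopologicalType} (P : prob T R).
Implicit Types (f g : T -> R) (M : R).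

Lemma bounded_integrable f M :
  measurable_fun [set: borel T] f -> (forall x, `|f x| <= M) ->
  P.-integrable [set: borel T] (EFin \o f).
Proof.
move=> mf fM; apply: measurable_bounded_integrable => //.
  exact: le_lt_trans (probability_le1 _ _) (ltry 1).
exists M; split; first by rewrite num_real.
by move=> M' M'M x _; exact: le_trans (fM x) (ltW M'M).
Qed.

Lemma le_integ f g M M' :
  measurable_fun [set: borel T] f -> (forall x, `|f x| <= M) ->
  measurable_fun [set: borel T] g -> (forall x, `|g x| <= M') ->
  (forall x, f x <= g x) -> integ P f <= integ P g.
Proof.
move=> mf fM mg gM' fg.
by apply: le_Rintegral => //; exact: bounded_integrable.
Qed.

Lemma integN f M :
  measurable_fun [set: borel T] f -> (forall x, `|f x| <= M) ->
  integ P (fun x => - f x) = - integ P f.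
Proof.
move=> mf fM; rewrite -mulN1r -(RintegralZl _ _ (bounded_integrable mf fM)) //.
by congr fine; apply: eq_integral => x _; rewrite mulN1r.
Qed.

Lemma integ_dominated_cvg (f_ : nat -> T -> R) f M :
  (forall n, measurable_fun [set: borel T] (f_ n)) ->
  (forall n x, `|f_ n x| <= M) ->
  measurable_fun [set: borel T] f -> (forall x, `|f x| <= M) ->
  {ae P, forall x, f_ n x @[n --> \oo] --> f x} ->
  integ P (f_ n) @[n --> \oo] --> integ P f.
Proof.
move=> mf_ f_M mf fM f_f.
have mEf_ n : measurable_fun [set: borel T] (EFin \o f_ n).
  exact/measurable_EFinP.
have mEf : measurable_fun [set: borel T] (EFin \o f) by exact/measurable_EFinP.
have Ef_f : \forall x \ae P,
    [set: borel T] x -> (f_ n x)%:E @[n --> \oo] --> (f x)%:E.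
  apply: (@filterS _ _ (ae_filter_ringOfSetsType P) _ _ _ f_f) => x fx _.
  by apply: cvg_EFin => //; exact: nearW.
have f_M' : \forall x \ae P, forall n, [set: borel T] x ->
    (`|(EFin \o f_ n) x| <= (EFin \o cst M) x)%E.
  by apply: aeW => x n _; rewrite /= lee_fin; exact: f_M.
have [_ _] := dominated_convergence measurableT mEf_ mEf Ef_f
  (finite_measure_integrable_cst P M measurableT) f_M'.
rewrite -(fineK (integrable_fin_num measurableT (bounded_integrable mf fM))).
by move=> /fine_cvgP[].
Qed.
End bounded_integration.

Section continuous_majorant.
Context {R : realType} {T : pseudoPMetricType R}.

Lemma continuous_majorant (P : prob T R) (G : T -> R) (M : R) (N : set T) :
  measurable (N : set (borel T)) -> P N = 0%E ->
  measurable_fun [set: borel T] G -> (forall x, `|G x| <= M) ->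
  (forall x, ~ N x -> {for x, continuous G}) ->
  forall eta, 0 < eta -> exists2 h : T -> R,
    [/\ continuous h, (forall x, `|h x| <= M) & forall x, G x <= h x] &
    integ P h < integ P G + eta.
Proof.
move=> mN PN mG GM G_cont eta eta0.
have env_cont n : continuous (lip_envelope G n%:R) :=
  lip_envelope_continuous GM (ler0n R n).
have env_bounded n x : `|lip_envelope G n%:R x| <= M :=
  lip_envelope_bounded GM x (ler0n R n).
have env_cvg : {ae P, forall x, lip_envelope G n%:R x @[n --> \oo] --> G x}.
  exists N; split => // x /= env_ncvg; apply: contrapT => Nx.
  exact/env_ncvg/lip_envelope_cvg/G_cont.
have := integ_dominated_cvg (fun n => continuous_measurable_borelR (env_cont n))
  env_bounded mG GM env_cvg.
move=> /cvgrPdist_lt/(_ eta eta0)[n _ /(_ n (leqnn n))].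
rewrite ltr_norml => /andP[env_approx _].
exists (lip_envelope G n%:R); last by lra.
by split => // x; exact (le_lip_envelope GM x (ler0n R n)).
Qed.

Lemma integ_weak_continuous_at (P : prob T R) (G : T -> R) (M : R) (N : set T) :
  measurable (N : set (borel T)) -> P N = 0%E ->
  measurable_fun [set: borel T] G -> (forall x, `|G x| <= M) ->
  (forall x, ~ N x -> {for x, continuous G}) ->
  forall eps, 0 < eps -> exists hu hv : T -> R, [/\ continuous hu, continuous hv &
    forall P' : prob T R, `|integ P' hu - integ P hu| < eps / 2 ->
      `|integ P' hv - integ P hv| < eps / 2 -> `|integ P' G - integ P G| < eps].
Proof.
move=> mN PN mG GM G_cont eps eps0; have eps20 : 0 < eps / 2 by rewrite divr_gt0.
have [hu [hu_cont huM Ghu] hu_approx] := continuous_majorant mN PN mG GM G_cont eps20.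
have mNG : measurable_fun [set: borel T] (fun x => - G x) by exact: measurable_funN.
have NGM x : `|- G x| <= M by rewrite normrN.
have NG_cont x : ~ N x -> {for x, continuous (fun x => - G x)}.
  by move=> Nx; apply: cvgN; exact: G_cont.
have [hv [hv_cont hvM NGhv] hv_approx] := continuous_majorant mN PN mNG NGM NG_cont eps20.
exists hu, hv; split => // P' hu_close hv_close.
have mhu := continuous_measurable_borelR hu_cont.
have mhv := continuous_measurable_borelR hv_cont.
have := le_integ P' mG GM mhu huM Ghu.
have := le_integ P' mNG NGM mhv hvM NGhv.
rewrite !(integN _ mG GM) in hv_approx *.
move: hu_close hv_close; rewrite !ltr_norml => /andP[? ?] /andP[? ?] ? ?.
by apply/andP; split; lra.
Qed.
End continuous_majorant.

Lemma compact_continuous_bounded {R : realType} (T : topologicalType) (g : T -> R) :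
  compact [set: T] -> continuous g -> exists M, forall y, `|g y| <= M.
Proof.
move=> T_compact g_cont.
have [M [_ gM]] :=
  compact_bounded (continuous_compact (continuous_subspaceT g_cont) T_compact).
by exists (M + 1) => y; apply: (gM (M + 1)); [rewrite ltrDl | exists y].
Qed.

Section almost_one_to_one_factor.
Context {R : realType} {X : pseudoPMetricType R} {Y : ptopologicalType}.
Variables (p : Y -> X) (E : set X).
Hypotheses (p_cont : continuous p) (X_hausdorff : hausdorff_space X)
  (Y_compact : compact [set: Y]) (p_surj : forall x, exists y, p y = x)
  (p_inj : forall y y', ~ E (p y) -> p y = p y' -> y = y')
  (E_countable : countable E).

Definition sec (x : X) : Y := projT1 (cid (p_surj x)).

Lemma secK : cancel sec p.
Proof. by move=> x; rewrite /sec; case: cid. Qed.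

Lemma sec_fiber x y : ~ E x -> p y = x -> y = sec x.
Proof. by move=> Ex pyx; apply: p_inj; rewrite ?secK pyx. Qed.

Lemma closed_image_setC (U : set Y) : open U -> closed (p @` ~` U).
Proof.
move=> U_open; apply: compact_closed X_hausdorff _.
apply: continuous_compact; first exact: continuous_subspaceT.
by rewrite -(setTI (~` U)); apply: compact_closedI Y_compact (open_closedC U_open).
Qed.

Lemma preimage_sec_open (U : set Y) : open U ->
  sec @^-1` U = ~` (p @` ~` U) `|` (sec @^-1` U `&` E).
Proof.
move=> U_open; apply/seteqP; split => x; last first.
  case=> [pUx|[]//]; apply: contrapT => Usx.
  by apply: pUx; exists (sec x); rewrite ?secK.
move=> Usx; have [Ex|Ex] := pselect (E x); first by right.
by left => -[y Uy pyx]; apply: Uy; rewrite (sec_fiber Ex pyx).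
Qed.

Lemma subset_countable_measurable (A : set X) :
  A `<=` E -> measurable (A : set (borel X)).
Proof.
move=> AE; apply: countable_measurable; first by move=> x; exact: set1_measurable_borel.
exact: sub_countable (subset_card_le AE) E_countable.
Qed.

Lemma measurable_sec : measurable_fun [set: borel X] (sec : borel X -> borel Y).
Proof.
apply: (@measurability _ _ (borel X) (borel Y) _ _ (@open Y) erefl).
move=> _ [U U_open <-]; rewrite setTI preimage_sec_open //.
apply: measurableU; last by apply: subset_countable_measurable => x [].
apply: open_measurable_borel; apply: closed_openC; exact: closed_image_setC.
Qed.

Lemma sec_continuous x : ~ E x -> {for x, continuous sec}.
Proof.
move=> Ex U /=; rewrite !nbhsE => -[V [V_open Vsx] VU].
exists (~` (p @` ~` V)); last first.
  move=> z pVz; apply: VU; apply: contrapT => Vsz.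
  by apply: pVz; exists (sec z); rewrite ?secK.
split; first by apply: closed_openC; exact: closed_image_setC.
by move=> [y Vy pyx]; apply: Vy; rewrite (sec_fiber Ex pyx).
Qed.

Definition sec_mfun : {mfun borel X >-> borel Y} := mfun_Sub (mem_set measurable_sec).

Lemma pushes_distribution_sec (mu : prob X R) :
  pushes p (distribution mu sec_mfun) mu.
Proof.
move=> A mA; rewrite /distribution /pushforward.
by congr (mu _); apply/seteqP; split => x /=; rewrite secK.
Qed.

Lemma pushesE (mu : prob X R) (nu : prob Y R) : mu E = 0%E -> pushes p nu mu ->
  forall B, measurable B -> nu B = mu (sec @^-1` B).
Proof.
move=> muE nu_mu B mB.
have mE := subset_countable_measurable (@subset_refl _ E).
have mpE : measurable (p @^-1` E : set (borel Y)).
  by rewrite -[_ @^-1` _]setTI; exact: continuous_measurable_borel.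
have msB : measurable (sec @^-1` B : set (borel X)).
  by rewrite -[_ @^-1` _]setTI; exact: measurable_sec.
have nu_pE : nu (p @^-1` E) = 0%E by rewrite nu_mu.
rewrite -(measureD_null mB mpE nu_pE) -(measureD_null msB mE muE).
suff -> : B `\` p @^-1` E = p @^-1` (sec @^-1` B `\` E).
  exact: nu_mu (measurableD msB mE).
apply/seteqP; split => y [By Epy]; split => //=.
- by rewrite -(sec_fiber Epy erefl).
- by rewrite (sec_fiber Epy erefl).
Qed.

Lemma integ_pushes (mu : prob X R) (nu : prob Y R) (g : Y -> R) (M : R) :
  mu E = 0%E -> pushes p nu mu -> continuous g -> (forall y, `|g y| <= M) ->
  integ nu g = integ mu (g \o sec).
Proof.
move=> muE nu_mu g_cont gM; rewrite /integ.
rewrite (eq_measure_integral (distribution mu sec_mfun)); last first.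
  by move=> A mA _; exact: pushesE.
rewrite integral_distribution //.
  apply/measurable_EFinP; exact: continuous_measurable_borelR.
apply: bounded_integrable (fun x => gM (sec x)).
exact: measurableT_comp (continuous_measurable_borelR g_cont) measurable_sec.
Qed.

Lemma nonatomic_pushes_unique (mu : prob X R) : nonatomic mu ->
  (exists nu : prob Y R, pushes p nu mu) /\
  (forall nu1 nu2 : prob Y R,
     pushes p nu1 mu -> pushes p nu2 mu -> same_measure nu1 nu2).
Proof.
move=> mu_na; have muE := nonatomic_countable0 X_hausdorff mu_na E_countable.
split; first by exists (distribution mu sec_mfun); exact: pushes_distribution_sec.
move=> nu1 nu2 nu1_mu nu2_mu B mB.
by rewrite (pushesE muE nu1_mu) ?(pushesE muE nu2_mu).
Qed.

Lemma lift_weak_continuous (Phi : prob X R -> prob Y R) :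
  (forall mu, nonatomic mu -> pushes p (Phi mu) mu) ->
  weak_continuous_on (@nonatomic R X) Phi.
Proof.
move=> Phi_lift mu mu_na n gs eps gs_cont eps0.
have muE := nonatomic_countable0 X_hausdorff mu_na E_countable.
have mE := subset_countable_measurable (@subset_refl _ E).
have /choice[M gsM] i := compact_continuous_bounded Y_compact (gs_cont i).
pose G i := gs i \o sec.
have mG i : measurable_fun [set: borel X] (G i).
  exact: measurableT_comp (continuous_measurable_borelR (gs_cont i)) measurable_sec.
have G_cont i x : ~ E x -> {for x, continuous (G i)}.
  by move=> Ex; apply: continuous_comp; [exact: sec_continuous | exact: gs_cont].
have /choice[hu /choice[hv huv]] i :=
  integ_weak_continuous_at mE muE (mG i) (fun x => gsM i (sec x)) (G_cont i) eps0.
pose hs (j : 'I_(n + n)) :=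
  match fintype.split j with inl i => hu i | inr i => hv i end.
exists (n + n)%N, hs, (eps / 2); split=> [j||mu' mu'_na close i].
- by rewrite /hs; case: fintype.split => i; have [] := huv i.
- by rewrite divr_gt0.
have mu'E := nonatomic_countable0 X_hausdorff mu'_na E_countable.
rewrite (integ_pushes mu'E (Phi_lift _ mu'_na) (gs_cont i) (gsM i)).
rewrite (integ_pushes muE (Phi_lift _ mu_na) (gs_cont i) (gsM i)).
have [_ _] := huv i; apply.
- by have := close (unsplit (inl i)); rewrite /hs unsplitK.
- by have := close (unsplit (inr i)); rewrite /hs unsplitK.
Qed.
End almost_one_to_one_factor.

Theorem lemma3p5 (R : realType) (Gamma : groupType) (X Xf : pseudoPMetricType R)
  (act : Gamma -> X -> X) (actf : Gamma -> Xf -> Xf)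
  (x1 : X) (f : X -> R) (pif : Xf -> X) :
  (* Gamma countably infinite *)
  (exists e : nat -> Gamma, bijective e) ->
  (* X compact metrizable (Hausdorff pseudometric), minimal continuous action with more than one gorbit *)
  hausdorff_space X -> compact [set: X] ->
  is_action act -> minimal_action act ->
  (exists x y : X, ~ gorbit act x y) ->
  (* x1 has trivial stabilizer *)
  (forall g : Gamma, act g x1 = x1 -> g = 1%g) ->
  (* f : X \ {x1} -> {1,-1} continuous, not continuously extendable to X *)
  {within ~` [set x1], continuous f} ->
  (forall x, x <> x1 -> f x = 1 \/ f x = -1) ->
  ~ (exists F : X -> R, [/\ continuous F,
        (forall x, F x = 1 \/ F x = -1) & (forall x, x <> x1 -> F x = f x)]) ->
  (* McMahon's extension X_f with factor map pi_f *)
  hausdorff_space Xf -> compact [set: Xf] ->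
  is_action actf -> minimal_action actf ->
  continuous pif ->
  (forall x, exists y, pif y = x) ->
  (forall g y, pif (actf g y) = act g (pif y)) ->
  (forall x, ~ gorbit act x1 x -> exists! y, pif y = x) ->
  (forall x, gorbit act x1 x ->
     exists y1 y2, y1 <> y2 /\ forall y, pif y = x <-> (y = y1 \/ y = y2)) ->
  (exists h : Xf -> R, [/\ continuous h, (forall y, h y = 1 \/ h y = -1) &
        (forall y, pif y <> x1 -> h y = f (pif y))]) ->
  (* conclusion *)
  (forall mu : prob X R, nonatomic mu ->
     (exists nu : prob Xf R, pushes pif nu mu) /\
     (forall nu1 nu2 : prob Xf R, pushes pif nu1 mu -> pushes pif nu2 mu ->
        same_measure nu1 nu2)) /\
  (forall Phi : prob X R -> prob Xf R,
     (forall mu, nonatomic mu -> pushes pif (Phi mu) mu) ->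
     weak_continuous_on (@nonatomic R X) Phi).
Proof.
move=> [e [e' _ e'K]] X_hausdorff _ _ _ _ _ _ _ _ _ Xf_compact _ _ pif_cont pif_surj _
  pif_uniq _ _.
have Gamma_countable : countable [set: Gamma].
  have -> : [set: Gamma] = range e by apply/seteqP; split => // g _; exists (e' g).
  exact: card_image_le.
have orbit_countable : countable (gorbit act x1).
  exact: card_le_trans (card_image_le _ _) Gamma_countable.
have pif_inj y y' : ~ gorbit act x1 (pif y) -> pif y = pif y' -> y = y'.
  by move=> /pif_uniq[y0 [_ y0_uniq]] pyy'; rewrite -(y0_uniq y) // (y0_uniq y').
split=> [mu|Phi].
  exact: nonatomic_pushes_unique pif_cont X_hausdorff Xf_compact pif_surj pif_inj
    orbit_countable mu.
exact: lift_weak_continuous pif_cont X_hausdorff Xf_compact pif_surj pif_inj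
  orbit_countable Phi.
Qed.
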